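(* Let $(\Sigma,\theta)$ be a Noetherian topological space. The map $S$ sending a topology $\tau$ on $\Sigma^*$ to the topology generated by the sets $\uparrow_{\le^*}(UV)$ for $U,V\in\tau$ and $\uparrow_{\le^*}W$ for $W\in\theta$ is a refinement function over $\Sigma^*$.
   Context: $\Sigma^*$ is the set of finite words; $UV$ is concatenation; one-letter words are identified with letters. $\le$ is the specialisation preorder of $\theta$; Higman's ordering $u\le^* w$ holds iff there is a strictly increasing $h$ from positions of $u$ to positions of $w$ with $u_i\le w_{h(i)}$; $\uparrow_{\le^*}$ denotes upward closure. A space is Noetherian if every subset is compact. A refinement function over a set $X$ is a map from topologies on $X$ to topologies on $X$ that is monotone for inclusion and sends Noetherian topologies to Noetherian topologies. *)

From Stdlib Require Import List Arith.
Import ListNotations.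

Definition subset {X : Type} := X -> Prop.

(* tau is a topology on X: contains X, closed under binary intersections and
   arbitrary unions (so also contains the empty set, as the empty union). *)
Definition is_topology {X : Type} (tau : (X -> Prop) -> Prop) : Prop :=
  tau (fun _ => True) /\
  (forall U V, tau U -> tau V -> tau (fun x => U x /\ V x)) /\
  (forall F : (X -> Prop) -> Prop, (forall U, F U -> tau U) ->
     tau (fun x => exists U, F U /\ U x)).

Definition generated_topology {X : Type} (B : (X -> Prop) -> Prop)
  : (X -> Prop) -> Prop :=
  fun U => forall tau, is_topology tau -> (forall S, B S -> tau S) -> tau U.

Definition compact_in {X : Type} (tau : (X -> Prop) -> Prop) (A : X -> Prop)
  : Prop :=
  forall F : (X -> Prop) -> Prop, (forall U, F U -> tau U) ->
    (forall x, A x -> exists U, F U /\ U x) ->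
    exists l : list (X -> Prop), (forall U, In U l -> F U) /\
      (forall x, A x -> exists U, In U l /\ U x).

Definition noetherian {X : Type} (tau : (X -> Prop) -> Prop) : Prop :=
  forall A : X -> Prop, compact_in tau A.

Definition refinement_function {X : Type}
  (R : ((X -> Prop) -> Prop) -> ((X -> Prop) -> Prop)) : Prop :=
  (forall tau, is_topology tau -> is_topology (R tau)) /\
  (forall tau1 tau2, is_topology tau1 -> is_topology tau2 ->
     (forall U, tau1 U -> tau2 U) -> forall U, R tau1 U -> R tau2 U) /\
  (forall tau, is_topology tau -> noetherian tau -> noetherian (R tau)).

Definition spec_le {S : Type} (theta : (S -> Prop) -> Prop) (x y : S) : Prop :=
  forall U, theta U -> U x -> U y.

Definition higman {S : Type} (le : S -> S -> Prop) (u w : list S) : Prop :=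
  exists h : nat -> nat,
    (forall i j, i < j -> j < length u -> h i < h j) /\
    (forall i, i < length u -> h i < length w) /\
    (forall i a, nth_error u i = Some a ->
       exists b, nth_error w (h i) = Some b /\ le a b).

Definition up_higman {S : Type} (le : S -> S -> Prop) (A : list S -> Prop)
  : list S -> Prop :=
  fun w => exists u, A u /\ higman le u w.

Definition concat_set {S : Type} (U V : list S -> Prop) : list S -> Prop :=
  fun w => exists u v, U u /\ V v /\ w = u ++ v.

Definition letters {S : Type} (W : S -> Prop) : list S -> Prop :=
  fun w => exists a, W a /\ w = [a].

Definition S_map {S : Type} (theta : (S -> Prop) -> Prop)
  (tau : (list S -> Prop) -> Prop) : (list S -> Prop) -> Prop :=
  generated_topology (fun B =>
    (exists U V, tau U /\ tau V /\
       (forall w, B w <-> up_higman (spec_le theta) (concat_set U V) w)) \/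
    (exists W, theta W /\
       (forall w, B w <-> up_higman (spec_le theta) (letters W) w))).

(* Call a family B of sets good when every sequence x_n in O_n, with O_n in B,
   has indices a < b with x_b in O_a.  A topology is Noetherian iff its family
   of open sets is good, and goodness passes from a subbasis to its finite meets
   (by a Ramsey-style extraction) and then to unions, so a good subbasis
   generates a Noetherian topology.  The subbasic sets of S(tau) are images of
   the opens U x V of tau x tau (resp. W of theta) under the relations
   uv <=* w (resp. a <=* w), and images, unions and binary products of good
   families are good: for products, first pass to a subsequence along which
   the first components satisfy x_b in U_a for all a < b.  In particular no
   property of Higman's ordering, and no Higman lemma, is needed. *)

From Stdlib Require Import List Arith Lia Classical IndefiniteDescription.
Import ListNotations.

Definition infinite (J : nat -> Prop) : Prop := forall N, exists b, N <= b /\ J b.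

Lemma infinite_impl (J J' : nat -> Prop) :
  infinite J -> (forall b, J b -> J' b) -> infinite J'.
Proof. intros HJ HJJ' N. destruct (HJ N) as [b [Nb Jb]]. eauto. Qed.

Lemma not_infinite (J : nat -> Prop) :
  ~ infinite J -> exists N, forall b, N <= b -> ~ J b.
Proof.
  intro HJ. apply NNPP. intro Hno. apply HJ. intro N.
  apply NNPP. intro HN. apply Hno. exists N. intros b Nb Jb. eauto.
Qed.

Lemma infinite_pigeonhole {A : Type} (l : list A) (Q : A -> nat -> Prop) (J : nat -> Prop) :
  infinite J -> (forall b, J b -> exists a, In a l /\ Q a b) ->
  exists a, In a l /\ infinite (fun b => J b /\ Q a b).
Proof.
  revert J. induction l as [|a l IH]; intros J HJ Hcov.
  - destruct (HJ 0) as [b [_ Jb]]. destruct (Hcov b Jb) as [a [[] _]].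
  - destruct (classic (infinite (fun b => J b /\ Q a b))) as [Ha|Ha].
    + exists a. split; [left|]; auto.
    + destruct (not_infinite _ Ha) as [N HN].
      destruct (IH (fun b => J b /\ N <= b)) as [a' [Ha' Hinf]].
      * intro M. destruct (HJ (max M N)) as [b [Mb Jb]].
        exists b. repeat split; auto; lia.
      * intros b [Jb Nb]. destruct (Hcov b Jb) as [a' [[<-|Ha'] Qb]].
        -- exfalso. apply (HN b Nb). auto.
        -- eauto.
      * exists a'. split; [right; exact Ha'|].
        apply (infinite_impl _ _ Hinf). intros b [[Jb _] Qb]. auto.
Qed.

Section NestedSubsequences.

Variables (T : Type) (idx : T -> nat) (P : T -> nat -> Prop) (J0 : nat -> Prop).
Hypothesis J0_infinite : infinite J0.
Hypothesis shrinking_step : forall J, infinite J -> (forall b, J b -> J0 b) ->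
  exists t, J (idx t) /\ infinite (fun b => J b /\ idx t < b /\ P t b).

(* Dependent choice: [g n] is picked in [Js n], and [Js (n+1)] keeps the points
   of [Js n] beyond [idx (g n)] that are related to [g n] by [P]. *)
Lemma nested_subsequence : exists g : nat -> T, (forall i, J0 (idx (g i))) /\
  (forall i j, i < j -> idx (g i) < idx (g j) /\ P (g i) (idx (g j))).
Proof.
  destruct (functional_choice (fun (J : nat -> Prop) t =>
      infinite J -> (forall b, J b -> J0 b) ->
      J (idx t) /\ infinite (fun b => J b /\ idx t < b /\ P t b))) as [pick Hpick].
  { intro J. destruct (classic (infinite J /\ forall b, J b -> J0 b)) as [[HJ HJ0]|Hno].
    - destruct (shrinking_step J HJ HJ0) as [t Ht]. eauto.
    - destruct (shrinking_step J0 J0_infinite (fun b Hb => Hb)) as [t _].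
      exists t. intros HJ HJ0. exfalso. auto. }
  set (next := fun (J : nat -> Prop) b => J b /\ idx (pick J) < b /\ P (pick J) b).
  set (Js := fix Js n := match n with 0 => J0 | S n => next (Js n) end).
  assert (Js_inf : forall n, infinite (Js n) /\ forall b, Js n b -> J0 b).
  { induction n as [|n [HJ HJ0]]; [split; auto|].
    split; [apply (Hpick _ HJ HJ0)|]. intros b [Jb _]. auto. }
  assert (Js_pick : forall n, Js n (idx (pick (Js n)))).
  { intro n. apply Hpick; apply Js_inf. }
  assert (Js_anti : forall n k b, Js (n + k) b -> Js n b).
  { intros n k b. induction k as [|k IH]; rewrite ?Nat.add_0_r, ?Nat.add_succ_r; auto.
    intros [Jb _]. auto. }
  exists (fun n => pick (Js n)). split.
  - intro i. apply (proj2 (Js_inf i)), Js_pick.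
  - intros i j ij.
    assert (Hj : Js (S i + (j - S i)) (idx (pick (Js j))))
      by (replace (S i + (j - S i)) with j by lia; apply Js_pick).
    apply Js_anti in Hj. destruct Hj as [_ Hj]. exact Hj.
Qed.

End NestedSubsequences.

Lemma infinite_enumeration (J : nat -> Prop) : infinite J ->
  exists g : nat -> nat, (forall i, J (g i)) /\ (forall i j, i < j -> g i < g j).
Proof.
  intro HJ.
  destruct (nested_subsequence nat (fun a => a) (fun _ _ => True) J HJ)
    as [g [Jg g_incr]].
  - intros J' HJ' _. destruct (HJ' 0) as [a [_ J'a]]. exists a. split; auto.
    intro N. destruct (HJ' (max N (S a))) as [b [Nb J'b]].
    exists b. repeat split; auto; lia.
  - exists g. split; auto. intros i j ij. apply (g_incr i j ij).
Qed.

Definition good_family {X : Type} (B : (X -> Prop) -> Prop) : Prop :=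
  forall (x : nat -> X) (O : nat -> X -> Prop),
    (forall n, B (O n)) -> (forall n, O n (x n)) -> exists a b, a < b /\ O a (x b).

Lemma good_family_antitone {X : Type} (B B' : (X -> Prop) -> Prop) :
  (forall O, B' O -> B O) -> good_family B -> good_family B'.
Proof. intros HB'B Hgood x O HO Hx. apply Hgood; auto. Qed.

Lemma list_index_bound {A : Type} (l : list A) (f : nat -> A) :
  (forall a, In a l -> exists n, a = f n) ->
  exists N, forall a, In a l -> exists n, n < N /\ a = f n.
Proof.
  induction l as [|a l IH]; intro Hl.
  - exists 0. intros a [].
  - destruct IH as [N HN]; [intros; apply Hl; right; auto|].
    destruct (Hl a (or_introl eq_refl)) as [m ->].
    exists (max N (S m)). intros a' [<-|Ha'].
    + exists m. split; [lia|auto].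
    + destruct (HN a' Ha') as [n [nN ->]]. exists n. split; [lia|auto].
Qed.

Lemma noetherian_good_family {X : Type} (tau : (X -> Prop) -> Prop) :
  noetherian tau -> good_family tau.
Proof.
  intros Hnoeth x O HO Hx.
  destruct (Hnoeth (fun y => exists n, y = x n) (fun U => exists n, U = O n))
    as [l [Hl Hcov]].
  - intros U [n ->]. apply HO.
  - intros y [n ->]. eauto.
  - destruct (list_index_bound l O Hl) as [N HN].
    destruct (Hcov (x N) (ex_intro _ N eq_refl)) as [U [HU Ux]].
    destruct (HN U HU) as [a [aN ->]]. eauto.
Qed.

(* The cover is built greedily: each new open is chosen around a point of [A]
   missed by all the previously chosen ones. *)
Lemma good_family_noetherian {X : Type} (tau : (X -> Prop) -> Prop) :
  good_family tau -> noetherian tau.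
Proof.
  intros Hgood A F HF Hcov. apply NNPP. intro Hno.
  destruct (functional_choice (fun (l : list {U | F U}) (p : X * {U | F U}) =>
      A (fst p) /\ proj1_sig (snd p) (fst p) /\
      forall U, In U l -> ~ proj1_sig U (fst p))) as [next Hnext].
  { intro l. apply NNPP. intro Hl. apply Hno. exists (map (@proj1_sig _ _) l). split.
    - intros U HU. apply in_map_iff in HU as [[V FV] [<- _]]. exact FV.
    - intros y Ay. destruct (Hcov y Ay) as [U [FU Uy]].
      apply NNPP. intro Hy. apply Hl. exists (y, exist _ U FU). repeat split; auto.
      intros V HV Vy. apply Hy. exists (proj1_sig V). split; auto. apply in_map; auto. }
  set (chosen := fix chosen n := match n with
                                 | 0 => []
                                 | S n => chosen n ++ [snd (next (chosen n))]
                                 end).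
  assert (chosen_prefix : forall a b, a < b -> In (snd (next (chosen a))) (chosen b)).
  { intros a b. induction b as [|b IH]; intro ab; [lia|].
    simpl. apply in_or_app. destruct (Nat.eq_dec a b) as [->|ab'].
    - right. left. reflexivity.
    - left. apply IH. lia. }
  destruct (Hgood (fun n => fst (next (chosen n)))
                  (fun n => proj1_sig (snd (next (chosen n))))) as [a [b [ab Hab]]].
  - intro n. apply HF, proj2_sig.
  - intro n. apply Hnext.
  - apply (proj2 (proj2 (Hnext (chosen b))) _ (chosen_prefix a b ab) Hab).
Qed.

Section GoodSequences.

Variables (X : Type) (B : (X -> Prop) -> Prop).
Hypothesis B_good : good_family B.
Variables (x : nat -> X) (O : nat -> X -> Prop).
Hypotheses (O_in_B : forall n, B (O n)) (O_x : forall n, O n (x n)).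

Lemma good_family_frequent (J : nat -> Prop) : infinite J ->
  exists a, J a /\ infinite (fun b => J b /\ a < b /\ O a (x b)).
Proof.
  intro HJ. apply NNPP. intro Hno.
  destruct (nested_subsequence nat (fun a => a) (fun a b => ~ O a (x b)) J HJ)
    as [g [_ Hg]].
  - intros J' HJ' J'J. destruct (HJ' 0) as [a [_ J'a]]. exists a. split; auto.
    assert (Ha : ~ infinite (fun b => J b /\ a < b /\ O a (x b)))
      by (intro Hinf; apply Hno; exists a; split; auto).
    destruct (not_infinite _ Ha) as [N HN].
    intro M. destruct (HJ' (max M (max N (S a)))) as [b [Mb J'b]].
    exists b. split; [lia|]. repeat split; auto; [lia|].
    intro Oab. apply (HN b); [lia|]. repeat split; auto. lia.
  - destruct (B_good (fun i => x (g i)) (fun i => O (g i))) as [i [j [ij Hij]]]; auto.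
    apply (proj2 (Hg i j ij) Hij).
Qed.

Lemma good_family_subsequence : exists g : nat -> nat,
  forall i j, i < j -> g i < g j /\ O (g i) (x (g j)).
Proof.
  destruct (nested_subsequence nat (fun a => a) (fun a b => O a (x b)) (fun _ => True))
    as [g [_ Hg]].
  - intro N. exists N. auto.
  - intros J HJ _. apply good_family_frequent, HJ.
  - exists g. exact Hg.
Qed.

End GoodSequences.

Definition product_family {X Y : Type} (B1 : (X -> Prop) -> Prop)
    (B2 : (Y -> Prop) -> Prop) (O : X * Y -> Prop) : Prop :=
  exists U V, B1 U /\ B2 V /\ forall p, O p <-> U (fst p) /\ V (snd p).

Lemma good_family_product {X Y : Type} (B1 : (X -> Prop) -> Prop)
    (B2 : (Y -> Prop) -> Prop) :
  good_family B1 -> good_family B2 -> good_family (product_family B1 B2).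
Proof.
  intros good1 good2 x O HO Hx.
  destruct (functional_choice (fun n (UV : (X -> Prop) * (Y -> Prop)) =>
      B1 (fst UV) /\ B2 (snd UV) /\ forall p, O n p <-> fst UV (fst p) /\ snd UV (snd p)))
    as [UV HUV].
  { intro n. destruct (HO n) as [U [V HUV]]. exists (U, V). exact HUV. }
  assert (Hx' : forall n, fst (UV n) (fst (x n)) /\ snd (UV n) (snd (x n)))
    by (intro n; apply HUV, Hx).
  destruct (good_family_subsequence _ B1 good1 (fun n => fst (x n)) (fun n => fst (UV n)))
    as [g Hg]; [apply HUV|apply Hx'|].
  destruct (good2 (fun i => snd (x (g i))) (fun i => snd (UV (g i)))) as [i [j [ij Hij]]];
    [intro; apply HUV|intro; apply Hx'|].
  destruct (Hg i j ij) as [gij Hfst].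
  exists (g i), (g j). split; auto. apply HUV. auto.
Qed.

Definition image_family {X Y : Type} (R : X -> Y -> Prop) (B : (X -> Prop) -> Prop)
    (T : Y -> Prop) : Prop :=
  exists O, B O /\ forall y, T y <-> exists x, O x /\ R x y.

Lemma good_family_image {X Y : Type} (R : X -> Y -> Prop) (B : (X -> Prop) -> Prop) :
  good_family B -> good_family (image_family R B).
Proof.
  intros Hgood y T HT Hy.
  destruct (functional_choice (fun n (Ox : (X -> Prop) * X) =>
      B (fst Ox) /\ (forall y, T n y <-> exists x, fst Ox x /\ R x y) /\
      fst Ox (snd Ox) /\ R (snd Ox) (y n))) as [Ox HOx].
  { intro n. destruct (HT n) as [O [BO HO]].
    destruct (proj1 (HO (y n)) (Hy n)) as [x [Ox Rx]]. exists (O, x). auto. }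
  destruct (Hgood (fun n => snd (Ox n)) (fun n => fst (Ox n))) as [a [b [ab Hab]]];
    [apply HOx|apply HOx|].
  exists a, b. split; auto. apply HOx. exists (snd (Ox b)). split; auto. apply HOx.
Qed.

Lemma good_family_union {X : Type} (B1 B2 : (X -> Prop) -> Prop) :
  good_family B1 -> good_family B2 -> good_family (fun O => B1 O \/ B2 O).
Proof.
  intros good1 good2 x O HO Hx.
  destruct (classic (infinite (fun n => B1 (O n)))) as [Hinf|Hfin].
  - destruct (infinite_enumeration _ Hinf) as [g [Hg g_incr]].
    destruct (good1 (fun i => x (g i)) (fun i => O (g i))) as [i [j [ij Hij]]]; auto.
    exists (g i), (g j). auto.
  - destruct (not_infinite _ Hfin) as [N HN].
    destruct (good2 (fun i => x (N + i)) (fun i => O (N + i))) as [i [j [ij Hij]]]; auto.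
    + intro i. destruct (HO (N + i)) as [H1|H2]; auto.
      exfalso. apply (HN (N + i)); [lia|auto].
    + exists (N + i), (N + j). split; [lia|auto].
Qed.

Definition finite_meets {X : Type} (B : (X -> Prop) -> Prop) (O : X -> Prop) : Prop :=
  exists L, (forall S, In S L -> B S) /\ forall x, O x <-> forall S, In S L -> S x.

Definition unions_of {X : Type} (B : (X -> Prop) -> Prop) (O : X -> Prop) : Prop :=
  forall x, O x -> exists S, B S /\ S x /\ forall y, S y -> O y.

Lemma unions_of_finite_meets_is_topology {X : Type} (B : (X -> Prop) -> Prop) :
  is_topology (unions_of (finite_meets B)).
Proof.
  split; [|split].
  - intros x _. exists (fun _ => True). split; auto.
    exists []. split; [intros S []|]. intro y. split; [intros _ S []|auto].
  - intros U V HU HV x [Ux Vx].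
    destruct (HU x Ux) as [SU [[LU [BU HSU]] [SUx SU_U]]].
    destruct (HV x Vx) as [SV [[LV [BV HSV]] [SVx SV_V]]].
    exists (fun y => SU y /\ SV y). split; [|split; [auto|intros y [SUy SVy]; auto]].
    exists (LU ++ LV). split.
    + intros S HS. apply in_app_or in HS as [HS|HS]; [apply BU|apply BV]; auto.
    + intro y. rewrite HSU, HSV. split.
      * intros [HyU HyV] S HS. apply in_app_or in HS as [HS|HS]; [apply HyU|apply HyV]; auto.
      * intro Hy. split; intros S HS; apply Hy, in_or_app; auto.
  - intros F HF x [U [FU Ux]]. destruct (HF U FU x Ux) as [S [BS [Sx SU]]].
    exists S. repeat split; auto. intros y Sy. eauto.
Qed.

Lemma generated_topology_unions_of_finite_meets {X : Type} (B : (X -> Prop) -> Prop)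
    (O : X -> Prop) :
  generated_topology B O -> unions_of (finite_meets B) O.
Proof.
  intro HO. apply HO; [apply unions_of_finite_meets_is_topology|].
  intros S BS x Sx. exists S. repeat split; auto.
  exists [S]. split; [intros S' [<-|[]]; auto|].
  intro y. split; [intros Sy S' [<-|[]]; auto|intro Hy; apply Hy; left; auto].
Qed.

Lemma good_family_unions_of {X : Type} (B : (X -> Prop) -> Prop) :
  good_family B -> good_family (unions_of B).
Proof.
  intros Hgood x O HO Hx.
  destruct (functional_choice (fun n S => B S /\ S (x n) /\ forall y, S y -> O n y))
    as [S HS]; [intro n; apply HO, Hx|].
  destruct (Hgood x S) as [a [b [ab Hab]]]; [apply HS|apply HS|].
  exists a, b. split; auto. apply HS, Hab.
Qed.

(* If [x b] escapes every earlier meet, each earlier index [a] has one member of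
   its list that misses infinitely many later points; extracting such pairs
   yields a sequence contradicting the goodness of [B]. *)
Lemma good_family_finite_meets {X : Type} (B : (X -> Prop) -> Prop) :
  good_family B -> good_family (finite_meets B).
Proof.
  intros Hgood x O HO Hx.
  destruct (functional_choice (fun n L => (forall S, In S L -> B S) /\
      forall y, O n y <-> forall S, In S L -> S y)) as [L HL]; [apply HO|].
  apply NNPP. intro Hno.
  assert (Hmiss : forall a b, a < b -> exists S, In S (L a) /\ ~ S (x b)).
  { intros a b ab. apply NNPP. intro Hall. apply Hno. exists a, b. split; auto.
    apply HL. intros S HS. apply NNPP. intro HSx. apply Hall. eauto. }
  destruct (nested_subsequence (nat * (X -> Prop)) fst
      (fun t b => In (snd t) (L (fst t)) /\ ~ snd t (x b)) (fun _ => True))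
    as [g [_ Hg]].
  - intro N. exists N. auto.
  - intros J HJ _. destruct (HJ 0) as [a [_ Ja]].
    destruct (infinite_pigeonhole (L a) (fun S b => ~ S (x b)) (fun b => J b /\ a < b))
      as [S [HS Hinf]].
    + intro M. destruct (HJ (max M (S a))) as [b [Mb Jb]].
      exists b. repeat split; auto; lia.
    + intros b [_ ab]. apply Hmiss, ab.
    + exists (a, S). split; auto.
      apply (infinite_impl _ _ Hinf). intros b [[Jb ab] HSb]. auto.
  - destruct (Hgood (fun i => x (fst (g i))) (fun i => snd (g i))) as [i [j [ij Hij]]].
    + intro i. apply (HL (fst (g i))), (proj1 (proj2 (Hg i (S i) (Nat.lt_succ_diag_r i)))).
    + intro i. apply (HL (fst (g i))); [apply Hx|].
      apply (proj1 (proj2 (Hg i (S i) (Nat.lt_succ_diag_r i)))).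
    + apply (proj2 (proj2 (Hg i j ij)) Hij).
Qed.

Lemma good_family_generated_noetherian {X : Type} (B : (X -> Prop) -> Prop) :
  good_family B -> noetherian (generated_topology B).
Proof.
  intro Hgood. apply good_family_noetherian.
  apply (good_family_antitone _ _ (generated_topology_unions_of_finite_meets B)).
  apply good_family_unions_of, good_family_finite_meets, Hgood.
Qed.

Lemma generated_topology_is_topology {X : Type} (B : (X -> Prop) -> Prop) :
  is_topology (generated_topology B).
Proof.
  split; [|split].
  - intros tau [Htop _] _. exact Htop.
  - intros U V HU HV tau Htau HB. apply Htau; [apply HU|apply HV]; auto.
  - intros F HF tau Htau HB. apply Htau. intros U FU. apply HF; auto.
Qed.

Lemma generated_topology_mono {X : Type} (B B' : (X -> Prop) -> Prop) :
  (forall S, B S -> B' S) ->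
  forall U, generated_topology B U -> generated_topology B' U.
Proof. intros BB' U HU tau Htau HB'. apply HU; auto. Qed.

Definition S_subbasis {Sigma : Type} (theta : (Sigma -> Prop) -> Prop)
    (tau : (list Sigma -> Prop) -> Prop) (B : list Sigma -> Prop) : Prop :=
  (exists U V, tau U /\ tau V /\
     (forall w, B w <-> up_higman (spec_le theta) (concat_set U V) w)) \/
  (exists W, theta W /\
     (forall w, B w <-> up_higman (spec_le theta) (letters W) w)).

Lemma S_subbasis_good {Sigma : Type} (theta : (Sigma -> Prop) -> Prop)
    (tau : (list Sigma -> Prop) -> Prop) :
  noetherian theta -> noetherian tau -> good_family (S_subbasis theta tau).
Proof.
  intros Htheta Htau.
  set (le := spec_le theta).
  apply (good_family_antitone (fun T =>
      image_family (fun p w => higman le (fst p ++ snd p) w) (product_family tau tau) T \/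
      image_family (fun a w => higman le [a] w) theta T)).
  - intros T [[U [V [HU [HV HT]]]]|[W [HW HT]]].
    + left. exists (fun p => U (fst p) /\ V (snd p)). split; [exists U, V; tauto|].
      intro w. rewrite HT. split.
      * intros [u [[u1 [u2 [Hu1 [Hu2 ->]]]] Hw]]. exists (u1, u2). auto.
      * intros [[u1 u2] [[Hu1 Hu2] Hw]]. exists (u1 ++ u2). split; auto.
        exists u1, u2. auto.
    + right. exists W. split; auto. intro w. rewrite HT. split.
      * intros [u [[a [Ha ->]] Hw]]. eauto.
      * intros [a [Ha Hw]]. exists [a]. split; auto. exists a. auto.
  - apply good_family_union; apply good_family_image;
      [apply good_family_product|]; apply noetherian_good_family; auto.
Qed.

Theorem mainTheorem11 (Sigma : Type) (theta : (Sigma -> Prop) -> Prop) :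
  is_topology theta -> noetherian theta ->
  refinement_function (S_map theta).
Proof.
  intros _ Htheta. split; [|split].
  - intros tau _. apply generated_topology_is_topology.
  - intros tau1 tau2 _ _ Htau12. apply generated_topology_mono.
    intros B [[U [V [HU [HV HB]]]]|HB]; [left; exists U, V; auto|right; exact HB].
  - intros tau _ Htau. apply (good_family_generated_noetherian (S_subbasis theta tau)).
    apply S_subbasis_good; auto.
Qed.
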